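(* The class of context-free languages is not closed under ${\rm bdir}$; for instance, for the context-free language $L=\{0^{2m}1^{4m}2^n3^n : m,n\ge1\}$, ${\rm bdir}(L)\cap(03)^+(13)^+(22)^+=\{(03)^{2m}(13)^{4m}(22)^{3m}:m\ge1\}$, so ${\rm bdir}(L)$ is not context-free.
   Context: For $w=a_1\cdots a_{2n}$ of even length, ${\rm bdir}(w)=a_1a_{2n}a_2a_{2n-1}\cdots a_na_{n+1}$; for $w=a_1\cdots a_{2n+1}$ of odd length, ${\rm bdir}(w)=a_1a_{2n+1}a_2a_{2n}\cdots a_na_{n+2}a_{n+1}$. ${\rm bdir}(L)=\{{\rm bdir}(w):w\in L\}$. *)

From mathcomp Require Import all_boot.
Set Implicit Arguments. Unset Strict Implicit. Unset Printing Implicit Defensive.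

Definition language (T : Type) := seq T -> Prop.

(* Position i of bdir w (0-indexed): for even i = 2j it is w_j, for odd
   i = 2j+1 it is w_(|w|-1-j).  This reproduces both the even and odd length
   cases of the paper's definition. *)
Definition bdir (T : Type) (w : seq T) : seq T :=
  match w with
  | [::] => [::]
  | x0 :: _ =>
      mkseq (fun i => if odd i then nth x0 w (size w - 1 - i./2)
                      else nth x0 w i./2) (size w)
  end.

Definition bdir_lang (T : Type) (L : language T) : language T :=
  fun w => exists v, L v /\ w = bdir v.

(* Nonterminals are natural numbers; a symbol is a terminal (inl) or a
   nonterminal (inr).  A grammar is a finite list of productions plus a
   start symbol. *)
Definition symbol (T : Type) := (T + nat)%type.

Record cfg (T : Type) := CFG {
  cfg_rules : seq (nat * seq (symbol T));
  cfg_start : nat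
}.

Inductive derives (T : eqType) (G : cfg T) : seq (symbol T) -> seq T -> Prop :=
  | der_nil : derives G [::] [::]
  | der_term a s w : derives G s w -> derives G (inl a :: s) (a :: w)
  | der_nonterm A rhs s u w :
      (A, rhs) \in cfg_rules G ->
      derives G rhs u -> derives G s w ->
      derives G (inr A :: s) (u ++ w).

Definition cfg_language (T : eqType) (G : cfg T) : language T :=
  fun w => derives G [:: inr (cfg_start G)] w.

Definition context_free (T : eqType) (L : language T) : Prop :=
  exists G : cfg T, forall w, L w <-> cfg_language G w.

Definition Lex : language nat :=
  fun w => exists m n, 1 <= m /\ 1 <= n /\
    w = nseq (2 * m) 0 ++ nseq (4 * m) 1 ++ nseq n 2 ++ nseq n 3.

Definition Rex : language nat :=
  fun w => exists a b c, 1 <= a /\ 1 <= b /\ 1 <= c /\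
    w = flatten (nseq a [:: 0; 3]) ++ flatten (nseq b [:: 1; 3])
        ++ flatten (nseq c [:: 2; 2]).

Definition Mex : language nat :=
  fun w => exists m, 1 <= m /\
    w = flatten (nseq (2 * m) [:: 0; 3]) ++ flatten (nseq (4 * m) [:: 1; 3])
        ++ flatten (nseq (3 * m) [:: 2; 2]).

(* Lex = { 0^2m 1^4m 2^n 3^n : m, n >= 1 } is context-free (an explicit
   grammar, built from two nonterminals of the shape A -> u A v | u v).
   bdir merely permutes the letters of a word, and it peels a word from both
   ends, so bdir (0^2m 1^4m 2^6m 3^6m) = (03)^2m (13)^4m (22)^3m; comparing
   letter counts then shows bdir(Lex) /\ (03)+(13)+(22)+ = Mex.

   If bdir(Lex) were context-free, so would be its intersection with the
   regular language (03)*(13)*(22)*, by the product of a grammar with a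
   finite automaton; every word of that intersection satisfies
   #0 + #1 = #3.  The pumping lemma applied to (03)^2M (13)^4M (22)^3M with
   M beyond the pumping constant yields a short pumped factor which, by the
   count constraints, must contain both a 0 and a 2 -- impossible, since
   these letters are separated by the whole (13)-block of length 8M. *)
From mathcomp Require Import all_boot zify.
Set Implicit Arguments. Unset Strict Implicit. Unset Printing Implicit Defensive.

Section Derivations.
Variables (T : eqType) (G : cfg T).

Lemma derives_nil_inv w : derives G [::] w -> w = [::].
Proof. by move=> H; inversion H. Qed.

Lemma derives_inl a s w : derives G (inl a :: s) w ->
  exists2 w', w = a :: w' & derives G s w'.
Proof. by move=> H; inversion H; subst; exists w0. Qed.

Lemma derives_inr A s w : derives G (inr A :: s) w ->
  exists rhs u w', [/\ w = u ++ w', (A, rhs) \in cfg_rules G,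
                       derives G rhs u & derives G s w'].
Proof. by move=> H; inversion H; subst; exists rhs, u, w0. Qed.

Lemma derives_single A w :
  derives G [:: inr A] w <-> exists2 rhs, (A, rhs) \in cfg_rules G & derives G rhs w.
Proof.
split.
- by case/derives_inr=> rhs [u [w' [-> Hr Hu /derives_nil_inv ->]]]; exists rhs; rewrite ?cats0.
- by case=> rhs Hr Hw; rewrite -[w]cats0; apply: der_nonterm Hr Hw (der_nil _).
Qed.

Lemma derives_cons_nt A s u w :
  derives G [:: inr A] u -> derives G s w -> derives G (inr A :: s) (u ++ w).
Proof. by case/derives_single=> rhs Hr Hu; apply: der_nonterm Hr Hu. Qed.

Lemma derives_terminals t s w :
  derives G (map inl t ++ s) w <-> exists2 w', w = t ++ w' & derives G s w'.
Proof.
elim: t w => [|a t IH] w /=; first by split=> [Hw|[w' -> //]]; exists w.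
split.
- by case/derives_inl=> w1 -> /IH [w' -> Hw']; exists w'.
- by case=> w' -> Hw'; apply: der_term; apply/IH; exists w'.
Qed.

Lemma derives_word t w : derives G (map inl t) w <-> w = t.
Proof.
rewrite -[map inl t]cats0 derives_terminals; split.
  by case=> w' -> /derives_nil_inv ->; rewrite cats0.
by move=> ->; exists [::]; [rewrite cats0 | exact: der_nil].
Qed.

End Derivations.

Section Pumping.
Variables (T : eqType) (G : cfg T).

(* derivesn c s w : s derives w using exactly c rule applications; the
   count is the measure for the inductions below. *)
Inductive derivesn : nat -> seq (symbol T) -> seq T -> Prop :=
| dern_nil : derivesn 0 [::] [::]
| dern_term c a s w : derivesn c s w -> derivesn c (inl a :: s) (a :: w)
| dern_nonterm c1 c2 A rhs s u w : (A, rhs) \in cfg_rules G ->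
    derivesn c1 rhs u -> derivesn c2 s w -> derivesn (c1 + c2).+1 (inr A :: s) (u ++ w).

Lemma derivesn_eq c c' s w w' : c = c' -> w = w' -> derivesn c s w -> derivesn c' s w'.
Proof. by move=> -> ->. Qed.

Lemma derives_derivesn s w : derives G s w <-> exists c, derivesn c s w.
Proof.
split.
- elim=> [|a s' w' _ [c H]|A rhs s' u w' Hr _ [c1 H1] _ [c2 H2]].
  + by exists 0; constructor.
  + by exists c; constructor.
  + by exists (c1 + c2).+1; apply: dern_nonterm Hr H1 H2.
- case=> c; elim=> [|c' a s' w' _ IH|c1 c2 A rhs s' u w' Hr _ IH1 _ IH2].
  + constructor.
  + by constructor.
  + by apply: der_nonterm Hr IH1 IH2.
Qed.

Lemma derivesn_single c A w : derivesn c [:: inr A] w ->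
  exists c1 rhs, [/\ (A, rhs) \in cfg_rules G, derivesn c1 rhs w & c = c1.+1].
Proof.
move=> H; inversion H as [|?|c1 c2 A' rhs s u w' Hr H1 H2 E1 E2 E3]; subst.
inversion H2; subst.
by exists c1, rhs; rewrite cats0 addn0.
Qed.

Lemma derivesn_rule c A rhs u : (A, rhs) \in cfg_rules G -> derivesn c rhs u ->
  derivesn c.+1 [:: inr A] u.
Proof.
by move=> Hr H; have := dern_nonterm Hr H dern_nil; rewrite addn0 cats0.
Qed.

(* frame s C u y d : a derivation tree for s with one hole labelled C; whatever
   C derives (say t, in c steps), s derives u ++ t ++ y in c + d steps. *)
Definition frame s C u y d :=
  forall t c, derivesn c [:: inr C] t -> derivesn (c + d) s (u ++ t ++ y).

Lemma frame_id A : frame [:: inr A] A [::] [::] 0.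
Proof. by move=> t c H; apply: derivesn_eq H; rewrite ?addn0 ?cats0. Qed.

Lemma frame_rule A rhs B u y d : (A, rhs) \in cfg_rules G -> frame rhs B u y d ->
  frame [:: inr A] B u y d.+1.
Proof. by move=> Hr H t c Ht; rewrite addnS; apply: derivesn_rule Hr (H _ _ Ht). Qed.

Lemma frame_comp s B C u y d u' y' d' :
  frame s B u y d -> frame [:: inr B] C u' y' d' -> frame s C (u ++ u') (y' ++ y) (d' + d).
Proof.
move=> H1 H2 t c Ht; apply: derivesn_eq (H1 _ _ (H2 _ _ Ht)); first by rewrite addnA.
by rewrite !catA.
Qed.

Definition K := maxn 2 (\max_(r <- cfg_rules G) size r.2).
Definition nonterms : seq nat := undup [seq r.1 | r <- cfg_rules G].

Lemma K_gt0 : 0 < K. Proof. by rewrite /K leq_max. Qed.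

Lemma rhs_le_K A rhs : (A, rhs) \in cfg_rules G -> size rhs <= K.
Proof.
move=> Hr; rewrite /K leq_max; apply/orP; right.
exact: (@leq_bigmax_seq _ _ xpredT (fun r : nat * seq (symbol T) => size r.2) _ Hr).
Qed.

Lemma rule_nonterms A rhs : (A, rhs) \in cfg_rules G -> A \in nonterms.
Proof. by move=> Hr; rewrite /nonterms mem_undup; apply/mapP; exists (A, rhs). Qed.

Lemma large_subtree j c s w : derivesn c s w -> size s * K ^ j < size w ->
  exists B u wB y cb d, [/\ w = u ++ wB ++ y, derivesn cb [:: inr B] wB,
    K ^ j < size wB, c = cb + d & frame s B u y d].
Proof.
have Kj : 0 < K ^ j by rewrite expn_gt0 K_gt0.
elim=> [|c' a s' w' _ IH|c1 c2 A rhs s' u w' Hr H1 _ H2 IH2] /=.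
- by rewrite mul0n.
- move=> Hs; have /IH [B [u1 [wB [y1 [cb [d [E1 E2 E3 E4 E5]]]]]]] : size s' * K ^ j < size w'.
    by nia.
  exists B, (a :: u1), wB, y1, cb, d; split=> //; first by rewrite E1.
  by move=> t c0 Ht; constructor; apply: E5.
- move=> Hs; case: (ltnP (K ^ j) (size u)) => Hu.
  + exists A, [::], u, w', c1.+1, c2; split=> //; first exact: derivesn_rule Hr H1.
    move=> t c0 /derivesn_single [c3 [rhs' [Hr' H3 ->]]].
    by rewrite addSn; apply: dern_nonterm Hr' H3 H2.
  + have /IH2 [B [u1 [wB [y1 [cb [d [E1 E2 E3 E4 E5]]]]]]] : size s' * K ^ j < size w'.
      by rewrite size_cat in Hs; nia.
    exists B, (u ++ u1), wB, y1, cb, (c1 + d).+1; split=> //.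
    * by rewrite E1 !catA.
    * by rewrite E4; lia.
    * move=> t c0 Ht; apply: (@derivesn_eq (c1 + (c0 + d)).+1 _ _ (u ++ (u1 ++ t ++ y1))).
      - lia.
      - by rewrite !catA.
      exact: dern_nonterm Hr H1 (E5 _ _ Ht).
Qed.

(* A pumpable decomposition of a derivation of w from A: a nonterminal C occurs
   below itself, with a nonempty-depth inner frame C => v C x. *)
Definition pumpable A w c := exists C u v m x y d e c',
  [/\ w = u ++ v ++ m ++ x ++ y, frame [:: inr A] C u y d, frame [:: inr C] C v x e,
      0 < e & derivesn c' [:: inr C] m /\ c = c' + e + d].

(* Outcome of descending from A while avoiding the nonterminals of X:
   either we reach a nonterminal of X, or we find a repetition. *)
Definition descent A w c (X : seq nat) :=
  (exists C u m y d c', [/\ C \in X, w = u ++ m ++ y, frame [:: inr A] C u y d,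
     derivesn c' [:: inr C] m & c = c' + d]) \/ pumpable A w c.

(* Following children of size > K^(j-1), a descent of length j from a
   subtree larger than K^j either meets the visited list X or repeats a
   nonterminal, as soon as |X| + j exceeds the number of nonterminals. *)
Lemma descend j : forall A w c (X : seq nat), derivesn c [:: inr A] w -> uniq X ->
  {subset X <= nonterms} -> size nonterms < size X + j + 1 -> K ^ j < size w ->
  descent A w c X.
Proof.
elim: j => [|j IH] A w c X Hd HX HXs Hk Hw;
  (case: (boolP (A \in X)) => HA;
   first by left; exists A, [::], w, [::], 0, c; rewrite cats0 addn0; split=> //; exact: frame_id);
  have [c1 [rhs [Hr H1 Ec]]] := derivesn_single Hd.
  have : size (A :: X) <= size nonterms.
    apply: uniq_leq_size; first by rewrite /= HA HX.
    by move=> y; rewrite inE => /orP [/eqP ->|]; [exact: rule_nonterms Hr| exact: HXs].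
  by move: Hk; rewrite addn0 addn1 ltnS => Hk /leq_trans/(_ Hk); rewrite /= ltnn.
have Hs : size rhs * K ^ j < size w.
  by apply: leq_ltn_trans Hw; rewrite expnS leq_mul2r (rhs_le_K Hr) orbT.
have [B [u1 [wB [y1 [cb [d [E1 E2 E3 E4 E5]]]]]]] := large_subtree H1 Hs.
have Hc := frame_rule Hr E5.
case: (IH B wB cb (A :: X) E2); rewrite ?[uniq _]/= ?HA ?HX //.
- by move=> y; rewrite inE => /orP [/eqP ->|]; [exact: rule_nonterms Hr | exact: HXs].
- by rewrite /= addSn -addnS.
- move=> [C [u1' [m [y1' [d' [c' [F1 F2 F3 F4 F5]]]]]]].
  have Hc2 := frame_comp Hc F3.
  move: F1; rewrite inE => /orP [/eqP EC|CX].
  + subst C; right; exists A, [::], (u1 ++ u1'), m, (y1' ++ y1), [::], 0, (d' + d.+1), c'.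
    split=> //; [by rewrite E1 F2 !catA cats0 | exact: frame_id | lia | split=> //; lia].
  + left; exists C, (u1 ++ u1'), m, (y1' ++ y1), (d' + d.+1), c'.
    split=> //; [by rewrite E1 F2 !catA | lia].
- move=> [C [u1' [v [m [x [y1' [d' [e [c' [F1 F2 F3 F4 [F5 F6]]]]]]]]]]].
  right; exists C, (u1 ++ u1'), v, m, x, (y1' ++ y1), (d' + d.+1), e, c'.
  split=> //; [by rewrite E1 F1 !catA | exact: frame_comp Hc F2 | split=> //; lia].
Qed.

Notation n := (size nonterms).

Lemma mid_subtree c : forall A w, derivesn c [:: inr A] w -> K ^ n < size w ->
  exists Z u wz y d c', [/\ w = u ++ wz ++ y, frame [:: inr A] Z u y d,
    derivesn c' [:: inr Z] wz, c = c' + d & K ^ n < size wz <= K ^ n.+1].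
Proof.
elim: c {-2}c (leqnn c) => [|N IH] c Hc A w Hd Hw.
  by have [c1 [rhs [_ _ E]]] := derivesn_single Hd; move: Hc; rewrite E.
case: (leqP (size w) (K ^ n.+1)) => Hw2.
  exists A, [::], w, [::], 0, c; rewrite ?cats0 ?addn0 Hw Hw2; split=> //; exact: frame_id.
have [c1 [rhs [Hr H1 Ec]]] := derivesn_single Hd.
have Hs : size rhs * K ^ n < size w.
  by apply: leq_ltn_trans Hw2; rewrite expnS leq_mul2r (rhs_le_K Hr) orbT.
have [B [u1 [wB [y1 [cb [d [E1 E2 E3 E4 E5]]]]]]] := large_subtree H1 Hs.
have [|Z [u1' [wz [y1' [d' [c' [F1 F2 F3 F4 F5]]]]]]] := IH cb _ B wB E2 E3.
  by move: Hc; rewrite Ec E4; lia.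
exists Z, (u1 ++ u1'), wz, (y1' ++ y1), (d' + d.+1), c'; split=> //.
- by rewrite E1 F1 !catA.
- exact: frame_comp (frame_rule Hr E5) F2.
- by rewrite Ec E4 F4; lia.
Qed.

(* The pumping lemma for a derivation counted by c: induction on c handles the
   degenerate repetition with v = x = [::], which yields a shorter derivation. *)
Lemma pump_derivesn S w : K ^ n.+1 < size w -> forall c, derivesn c [:: inr S] w ->
  exists u v m x y, [/\ w = u ++ v ++ m ++ x ++ y, 0 < size (v ++ x),
    size (v ++ m ++ x) <= K ^ n.+1 &
    derives G [:: inr S] (u ++ v ++ v ++ m ++ x ++ x ++ y)].
Proof.
move=> Hw c; elim: c {-2}c (leqnn c) => [|N IH] c Hc Hd.
  by have [c1 [rhs [_ _ E]]] := derivesn_single Hd; move: Hc; rewrite E.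
have Hw' : K ^ n < size w.
  by apply: leq_trans Hw; rewrite ltnS expnS leq_pmull // K_gt0.
have [Z [u1 [wz [y1 [d [c' [E1 E2 E3 E4 /andP [E5 E6]]]]]]]] := mid_subtree Hd Hw'.
case: (@descend n Z wz c' [::] E3 isT) => //; first by rewrite /=; lia.
  by move=> [C [? [? [? [? [? [] ]]]]]].
move=> [C [u1' [v [m [x [y1' [d' [e [c'' [F1 F2 F3 F4 [F5 F6]]]]]]]]]]].
have Hframe := frame_comp E2 F2.
have Ew : w = (u1 ++ u1') ++ v ++ m ++ x ++ (y1' ++ y1) by rewrite E1 F1 !catA.
case: (posnP (size (v ++ x))) => Hvx.
  move: Hvx; rewrite size_cat => /eqP; rewrite addn_eq0 !size_eq0 => /andP [/eqP Ev /eqP Ex].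
  apply: (IH (c'' + (d' + d))); first by move: Hc; rewrite E4 F6; lia.
  by apply: derivesn_eq (Hframe _ _ F5) => //; rewrite Ew Ev Ex.
exists (u1 ++ u1'), v, m, x, (y1' ++ y1); split=> //.
  by apply: leq_trans E6; rewrite F1 !size_cat; lia.
apply/derives_derivesn; eexists; apply: derivesn_eq (Hframe _ _ (F3 _ _ (F3 _ _ F5))) => //.
by rewrite !catA.
Qed.

Lemma cfg_pumping : exists p, forall w, cfg_language G w -> p < size w ->
  exists u v m x y, [/\ w = u ++ v ++ m ++ x ++ y, 0 < size (v ++ x),
    size (v ++ m ++ x) <= p & cfg_language G (u ++ v ++ v ++ m ++ x ++ x ++ y)].
Proof.
exists (K ^ n.+1) => w /derives_derivesn [c Hd] Hw.
have [u [v [m [x [y [H1 H2 H3 H4]]]]]] := pump_derivesn Hw Hd.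
by exists u, v, m, x, y.
Qed.

End Pumping.

(* Deterministic automata with states 0 .. N-1 and transition function delta. *)
Definition run (T : Type) (delta : nat -> T -> nat) (q : nat) (w : seq T) : nat :=
  foldl delta q w.

Lemma run_cat (T : Type) (delta : nat -> T -> nat) q u w :
  run delta q (u ++ w) = run delta (run delta q u) w.
Proof. exact: foldl_cat. Qed.

Lemma base_digit_inj N x r x' r' : r < N -> r' < N ->
  x * N + r = x' * N + r' -> x = x' /\ r = r'.
Proof.
move=> Hr Hr' E.
have Err : r = r' by have := congr1 (modn^~ N) E; rewrite /= !modnMDl !modn_small.
move: E; rewrite Err => /addIn /eqP; rewrite eqn_pmul2r; last exact: leq_ltn_trans Hr'.
by move=> /eqP.
Qed.

(* The classical triple construction: the context-free languages are closed
   under intersection with regular languages. *)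
Section RegularIntersection.
Variables (T : eqType) (N : nat) (delta : nat -> T -> nat) (q0 : nat) (F : seq nat).
Hypothesis delta_lt : forall q a, delta q a < N.
Hypothesis q0_lt : q0 < N.
Hypothesis F_lt : forall f, f \in F -> f < N.
Variable G : cfg T.

Lemma run_lt q w : q < N -> run delta q w < N.
Proof. by elim: w q => [|a w IH] q Hq //=; apply: IH. Qed.

(* The nonterminal [p, A, q] derives the words derived by A that lead the
   automaton from p to q; 0 is reserved for the new start symbol. *)
Definition triple p A q := 1 + (A * N + p) * N + q.

Lemma triple_inj p A q p' A' q' : p < N -> q < N -> p' < N -> q' < N ->
  triple p A q = triple p' A' q' -> [/\ p = p', A = A' & q = q'].
Proof.
rewrite /triple -!addnA => Hp Hq Hp' Hq' /eqP; rewrite eqn_add2l => /eqP.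
by case/base_digit_inj=> // /base_digit_inj [] // -> -> ->.
Qed.

(* All ways of annotating the symbols of a right-hand side with automaton
   states, starting in state p, paired with the final state. *)
Fixpoint annotate (p : nat) (s : seq (symbol T)) : seq (seq (symbol T) * nat) :=
  match s with
  | [::] => [:: ([::], p)]
  | inl a :: s' => [seq (inl a :: r.1, r.2) | r <- annotate (delta p a) s']
  | inr B :: s' => [seq (inr (triple p B p') :: r.1, r.2) | p' <- iota 0 N, r <- annotate p' s']
  end.

Definition annotate_spec p s r q : Prop :=
  match s with
  | [::] => r = [::] /\ q = p
  | inl a :: s' => exists2 r', r = inl a :: r' & (r', q) \in annotate (delta p a) s'
  | inr B :: s' => exists p' r', [/\ p' < N, r = inr (triple p B p') :: r' &
                                     (r', q) \in annotate p' s']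
  end.

Lemma annotate_inv p s r q : (r, q) \in annotate p s -> annotate_spec p s r q.
Proof.
case: s => [|[a|B] s'] /=.
- by rewrite inE => /eqP [-> ->].
- by case/mapP => [[r' q']] H [-> ->]; exists r'.
- case/allpairsPdep => p' [[r' q']] [Hp H [-> ->]]; exists p', r'.
  by rewrite mem_iota in Hp.
Qed.

Lemma annotate_lt s : forall p r q, p < N -> (r, q) \in annotate p s -> q < N.
Proof.
elim: s => [|[a|B] s IH] p r q Hp /annotate_inv /=.
- by case=> _ ->.
- by case=> r' _; apply: IH.
- by case=> p' [r' [Hp' _]]; apply: IH.
Qed.

Definition inter_rules : seq (nat * seq (symbol T)) :=
  [seq (0, [:: inr (triple q0 (cfg_start G) f)]) | f <- F] ++
  flatten [seq [seq (triple p rl.1 r.2, r.1) | p <- iota 0 N, r <- annotate p rl.2]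
          | rl <- cfg_rules G].

Definition inter_cfg := CFG inter_rules 0.

Lemma inter_lift s w : derives G s w -> forall p, p < N ->
  exists2 r, (r, run delta p w) \in annotate p s & derives inter_cfg r w.
Proof.
elim=> [|a s' w' _ IH|A rhs s' u w' Hr _ IH1 _ IH2] p Hp.
- by exists [::]; [rewrite inE | constructor].
- have [r H1 H2] := IH (delta p a) (delta_lt _ _).
  by exists (inl a :: r); [apply/mapP; exists (r, run delta (delta p a) w') | constructor].
- have [r1 H1 H1'] := IH1 p Hp.
  have [r2 H2 H2'] := IH2 _ (run_lt u Hp).
  exists (inr (triple p A (run delta p u)) :: r2).
  + rewrite run_cat /=; apply/allpairsPdep.
    by exists (run delta p u), (r2, run delta (run delta p u) w'); rewrite mem_iota run_lt.
  + apply: der_nonterm H1' H2'; rewrite /= mem_cat; apply/orP; right.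
    apply/flatten_mapP; exists (A, rhs) => //; apply/allpairsPdep.
    by exists p, (r1, run delta p u); rewrite mem_iota Hp.
Qed.

Lemma inter_project r w : derives inter_cfg r w -> forall s p q, p < N ->
  (r, q) \in annotate p s -> derives G s w /\ run delta p w = q.
Proof.
elim=> [|a r' w' _ IH|X rhs' r' u w' Hr _ IH1 _ IH2] s p q Hp /annotate_inv.
- case: s => [|[a|B] s'] /=; last by case=> ? [? []].
  + by move=> [_ ->]; split=> //; constructor.
  + by case.
- case: s => [|[b|B] s'] /=; [by case | | by case=> ? [? []]].
  case=> r'' [<- <-] H.
  by have [H1 H2] := IH _ _ _ (delta_lt p a) H; split=> //; constructor.
- case: s => [|[b|B] s'] /=; [by case | by case | ].
  case=> p' [r'' [Hp' [EX Er] H]]; subst X r''.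
  move: Hr; rewrite /= mem_cat => /orP [/mapP [f _ [E _]]|]; first by move: E; rewrite /triple; lia.
  case/flatten_mapP => [[A rhs]] HAr /allpairsPdep [p0 [[r0 q0']] [Hp0 Hr0 [E1 E2]]].
  subst rhs'.
  rewrite mem_iota /= add0n in Hp0; rewrite !add0n in E1.
  have E : triple p0 A q0' = triple p B p' by rewrite /triple -!addnA -E1.
  have [Ep EA Eq] := triple_inj Hp0 (annotate_lt Hp0 Hr0) Hp Hp' E; subst p0 A q0'.
  have [D1 R1] := IH1 _ _ _ Hp Hr0.
  have [D2 R2] := IH2 _ _ _ Hp' H.
  by split; [apply: der_nonterm HAr D1 D2 | rewrite run_cat R1].
Qed.

Lemma inter_cfg_language w :
  cfg_language inter_cfg w <-> cfg_language G w /\ run delta q0 w \in F.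
Proof.
split.
- case/derives_single => rhs Hr Hd; move: Hr; rewrite mem_cat => /orP [/mapP [f Hf [Er]]|].
    subst rhs.
    have [] := @inter_project _ _ Hd [:: inr (cfg_start G)] q0 f q0_lt.
      by apply/allpairsPdep; exists f, ([::], f); rewrite mem_iota F_lt // inE.
    by move=> D ->.
  case/flatten_mapP => [[A rhs']] _ /allpairsPdep [p0 [[r0 q0']] [_ _ [E _]]].
  by move: E; rewrite /triple; lia.
- move=> [Hd Hacc]; have [r Hr Hd'] := inter_lift Hd q0_lt.
  move: Hr => /annotate_inv [p' [r' [Hp' Er /annotate_inv [Er' Eq]]]]; subst r r'.
  apply/derives_single; exists [:: inr (triple q0 (cfg_start G) p')] => //.
  by rewrite mem_cat; apply/orP; left; apply/mapP; exists p'; rewrite -Eq.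
Qed.

End RegularIntersection.

Lemma context_free_inter_dfa (T : eqType) N (delta : nat -> T -> nat) q0 (F : seq nat)
    (L : language T) :
  (forall q a, delta q a < N) -> q0 < N -> (forall f, f \in F -> f < N) ->
  context_free L -> context_free (fun w => L w /\ run delta q0 w \in F).
Proof.
move=> Hdelta Hq0 HF [G HG]; exists (inter_cfg N delta q0 F G) => w.
by rewrite inter_cfg_language // HG.
Qed.

Lemma flatten_nseq_nseq (T : Type) m k (a : T) : flatten (nseq m (nseq k a)) = nseq (k * m) a.
Proof. by elim: m => [|m IH]; rewrite ?muln0 //= IH mulnS nseqD. Qed.

Lemma count_flatten_nseq (T : Type) (P : pred T) k s :
  count P (flatten (nseq k s)) = k * count P s.
Proof. by elim: k => [|k IH] //; rewrite /= count_cat IH mulSn. Qed.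

Lemma size_flatten_nseq (T : Type) k (s : seq T) : size (flatten (nseq k s)) = k * size s.
Proof. by elim: k => [|k IH] //; rewrite /= size_cat IH mulSn. Qed.

Lemma mem_flatten_nseq (T : eqType) k (s : seq T) x : x \in flatten (nseq k s) -> x \in s.
Proof. by elim: k => [|k IH] //; rewrite /= mem_cat => /orP [|/IH]. Qed.

Lemma factor_straddles (T : eqType) (A B C u t y : seq T) a c :
  A ++ B ++ C = u ++ t ++ y -> a \in t -> a \notin B ++ C -> c \in t -> c \notin A ++ B ->
  size B < size t.
Proof.
move=> E ta aBC tc cAB.
have Hu : size u < size A.
  rewrite ltnNge; apply/negP => HAu; move/negP: aBC; apply.
  have : drop (size u) (A ++ B ++ C) = t ++ y by rewrite E drop_size_cat.
  rewrite drop_cat ltnNge HAu /= => Edrop.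
  have aDrop : a \in drop (size u - size A) (B ++ C) by rewrite Edrop mem_cat ta.
  exact: mem_drop aDrop.
have Hut : size A + size B < size u + size t.
  rewrite ltnNge; apply/negP => Hle; move/negP: cAB; apply.
  have : take (size (u ++ t)) ((A ++ B) ++ C) = u ++ t by rewrite -catA E catA take_size_cat.
  rewrite take_cat !size_cat ltn_neqAle Hle andbT.
  case: eqP => [EAB|_] /= Etake.
    have : c \in u ++ t by rewrite mem_cat tc orbT.
    by rewrite -Etake EAB subnn take0 cats0.
  have ctake : c \in take (size u + size t) (A ++ B) by rewrite Etake mem_cat tc orbT.
  by apply: mem_take ctake.
by lia.
Qed.

Lemma bdirE (T : Type) (y : T) s : bdir s =
  mkseq (fun i => if odd i then nth y s (size s - 1 - i./2) else nth y s i./2) (size s).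
Proof.
case: s => [//|x s]; rewrite /bdir /mkseq; apply/eq_in_map => i.
rewrite mem_iota add0n => /andP [_ Hi].
by case: odd; apply: set_nth_default; lia.
Qed.

Lemma bdir_cons_rcons (T : Type) (a b : T) s : bdir (a :: rcons s b) = a :: b :: bdir s.
Proof.
rewrite !(bdirE a) /mkseq.
have -> : size (a :: rcons s b) = (size s).+2 by rewrite /= size_rcons.
have -> : iota 0 (size s).+2 = 0 :: 1 :: map (addn 2) (iota 0 (size s)).
  by rewrite -iotaDl.
rewrite !map_cons -map_comp; congr [:: _, _ & _].
  by rewrite subn1 subn0 /= nth_rcons ltnn eqxx.
apply/eq_in_map => i; rewrite mem_iota add0n => /andP [_ Hi] /=.
have Hh : i./2 < size s by rewrite -divn2; apply: leq_ltn_trans Hi; apply: leq_div.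
rewrite add0n negbK; case: odd.
  have -> : (size s).+2 - 1 - (i./2).+1 = (size s - 1 - i./2).+1 by lia.
  by rewrite /= nth_rcons ifT //; lia.
by rewrite nth_rcons Hh.
Qed.

Lemma bdir_perm (T : eqType) (s : seq T) : perm_eq (bdir s) s.
Proof.
elim: {s}(size s) {-2}s (leqnn (size s)) => [|n IH] [|a s] // Hs.
case/lastP: s Hs => [//|s b] Hs.
rewrite bdir_cons_rcons perm_cons perm_sym perm_rcons perm_cons perm_sym.
by apply: IH; move: Hs; rewrite /= size_rcons ltnS => /ltnW.
Qed.

Lemma count_bdir (T : eqType) (a : T) s : count_mem a (bdir s) = count_mem a s.
Proof. exact/permP/bdir_perm. Qed.

Lemma bdir_frame (T : Type) k (a b : T) s :
  bdir (nseq k a ++ s ++ nseq k b) = flatten (nseq k [:: a; b]) ++ bdir s.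
Proof.
elim: k => [|k IH]; first by rewrite cats0.
have -> : nseq k.+1 a ++ s ++ nseq k.+1 b = a :: rcons (nseq k a ++ s ++ nseq k b) b.
  have Eb : nseq k.+1 b = nseq k b ++ [:: b] by rewrite -addn1 nseqD.
  by rewrite Eb -cats1 -!catA.
by rewrite bdir_cons_rcons IH.
Qed.

Section NestedRules.
Variables (T : eqType) (G : cfg T) (A : nat) (u v : seq T).
Hypothesis u_nonempty : 0 < size u.
Hypothesis A_rec : (A, map inl u ++ inr A :: map inl v) \in cfg_rules G.
Hypothesis A_base : (A, map inl u ++ map inl v) \in cfg_rules G.
Hypothesis A_rules : forall rhs, (A, rhs) \in cfg_rules G ->
  rhs = map inl u ++ inr A :: map inl v \/ rhs = map inl u ++ map inl v.

Definition nested m := flatten (nseq m u) ++ flatten (nseq m v).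

Lemma nestedS m : nested m.+1 = u ++ nested m ++ v.
Proof.
have Ev : flatten (nseq m.+1 v) = flatten (nseq m v) ++ v.
  by rewrite -addn1 nseqD flatten_cat /= cats0.
by rewrite /nested Ev /= !catA.
Qed.

Lemma derives_nested w : derives G [:: inr A] w <-> exists2 m, 0 < m & w = nested m.
Proof.
split.
- elim: {w}(size w) {-2}w (leqnn (size w)) => [|N IH] w Hw /derives_single [rhs Hr];
    case/A_rules: Hr => -> /derives_terminals [w1 Ew].
  1,2: by move: Hw; rewrite Ew size_cat; case: u u_nonempty.
  + case/derives_inr=> rhs' [w2 [w3 [Ew1 Hr' Hw2 /derives_word Ew3]]].
    have Hsz : size w2 <= N.
      by move: Hw; rewrite Ew Ew1 !size_cat; case: u u_nonempty => //= *; lia.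
    have [|m Hm Em] := IH w2 Hsz; first by apply/derives_single; exists rhs'.
    by exists m.+1 => //; rewrite nestedS Ew Ew1 Ew3 Em.
  + by move/derives_word=> Ew1; exists 1 => //; rewrite /nested /= !cats0 Ew Ew1.
- case=> m Hm ->; elim: m Hm => [//|[|m] IH] _.
  + apply/derives_single; exists (map inl u ++ map inl v) => //.
    by apply/derives_terminals; exists v; rewrite /nested /= ?cats0 //; apply/derives_word.
  + apply/derives_single; exists (map inl u ++ inr A :: map inl v) => //.
    rewrite nestedS; apply/derives_terminals; exists (nested m.+1 ++ v) => //.
    by apply: derives_cons_nt; [exact: IH | apply/derives_word].
Qed.

End NestedRules.

Definition lex_cfg : cfg nat := CFG
  [:: (0, [:: inr 1; inr 2]);
      (1, map inl (nseq 2 0) ++ inr 1 :: map inl (nseq 4 1));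
      (1, map inl (nseq 2 0) ++ map inl (nseq 4 1));
      (2, map inl (nseq 1 2) ++ inr 2 :: map inl (nseq 1 3));
      (2, map inl (nseq 1 2) ++ map inl (nseq 1 3))] 0.

Lemma lex_X w : derives lex_cfg [:: inr 1] w <->
  exists2 m, 0 < m & w = nseq (2 * m) 0 ++ nseq (4 * m) 1.
Proof.
rewrite (@derives_nested _ _ _ (nseq 2 0) (nseq 4 1)) //.
  by split=> -[m Hm ->]; exists m; rewrite // /nested !flatten_nseq_nseq.
by move=> rhs; rewrite !inE => /orP [|/orP [|/orP [|/orP []]]] /eqP [] // ->; [left | right].
Qed.

Lemma lex_Y w : derives lex_cfg [:: inr 2] w <-> exists2 n, 0 < n & w = nseq n 2 ++ nseq n 3.
Proof.
rewrite (@derives_nested _ _ _ (nseq 1 2) (nseq 1 3)) //.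
  by split=> -[n Hn ->]; exists n; rewrite // /nested !flatten_nseq_nseq mul1n.
by move=> rhs; rewrite !inE => /orP [|/orP [|/orP [|/orP []]]] /eqP [] // ->; [left | right].
Qed.

Lemma lex_context_free : context_free Lex.
Proof.
exists lex_cfg => w; split.
- move=> [m [n [Hm [Hn ->]]]]; apply/derives_single; exists [:: inr 1; inr 2] => //.
  rewrite catA -[_ ++ nseq n 3]cats0; apply: derives_cons_nt; first by apply/lex_X; exists m.
  by apply: derives_cons_nt; [apply/lex_Y; exists n | exact: der_nil].
- case/derives_single => rhs; rewrite !inE => /orP [/eqP [->]|]; last by case/or4P=> /eqP.
  case/derives_inr=> rhs1 [w1 [w' [-> Hr1 Hw1]]].
  case/derives_inr=> rhs2 [w2 [w3 [-> Hr2 Hw2 /derives_nil_inv ->]]].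
  have /lex_X [m Hm ->] : derives lex_cfg [:: inr 1] w1 by apply/derives_single; exists rhs1.
  have /lex_Y [n Hn ->] : derives lex_cfg [:: inr 2] w2 by apply/derives_single; exists rhs2.
  by exists m, n; rewrite cats0 -catA.
Qed.

Definition lex_word m n := nseq (2 * m) 0 ++ nseq (4 * m) 1 ++ nseq n 2 ++ nseq n 3.
Definition rex_word a b c :=
  flatten (nseq a [:: 0; 3]) ++ flatten (nseq b [:: 1; 3]) ++ flatten (nseq c [:: 2; 2]).
Definition mex_word m := rex_word (2 * m) (4 * m) (3 * m).

(* The central computation: bdir pairs each 0 and the first 1s with the 3s at
   the back, and the 2s with each other. *)
Lemma bdir_lex_word m : bdir (lex_word m (6 * m)) = mex_word m.
Proof.
have -> : lex_word m (6 * m) =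
    nseq (2 * m) 0 ++ (nseq (4 * m) 1 ++ (nseq (3 * m) 2 ++ [::] ++ nseq (3 * m) 2)
                       ++ nseq (4 * m) 3) ++ nseq (2 * m) 3.
  have E2 : nseq (6 * m) 2 = nseq (3 * m) 2 ++ nseq (3 * m) 2 by rewrite -nseqD; congr nseq; lia.
  have E3 : nseq (6 * m) 3 = nseq (4 * m) 3 ++ nseq (2 * m) 3 by rewrite -nseqD; congr nseq; lia.
  by rewrite /lex_word E2 E3 cat0s -!catA.
by rewrite !bdir_frame cats0.
Qed.

Lemma count_lex_word m n :
  [/\ count_mem 0 (lex_word m n) = 2 * m, count_mem 1 (lex_word m n) = 4 * m,
      count_mem 2 (lex_word m n) = n & count_mem 3 (lex_word m n) = n].
Proof. by rewrite /lex_word !count_cat !count_nseq /=; split; lia. Qed.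

Lemma count_rex_word a b c :
  [/\ count_mem 0 (rex_word a b c) = a, count_mem 1 (rex_word a b c) = b,
      count_mem 2 (rex_word a b c) = 2 * c & count_mem 3 (rex_word a b c) = a + b].
Proof. by rewrite /rex_word !count_cat !count_flatten_nseq /=; split; lia. Qed.

(* bdir(Lex) meets (03)^+(13)^+(22)^+ exactly in Mex: a word of Rex is
   determined by its letter counts, and bdir preserves the counts of Lex. *)
Lemma bdir_lex_inter_rex w : (bdir_lang Lex w /\ Rex w) <-> Mex w.
Proof.
split.
- move=> [[v [[m [n [Hm [Hn Ev]]]] Ew]] [a [b [c [Ha [Hb [Hc Er]]]]]]].
  have C k : count_mem k (rex_word a b c) = count_mem k (lex_word m n).
    by rewrite -[rex_word a b c]Er Ew count_bdir Ev.
  have [A0 A1 A2 A3] := count_lex_word m n.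
  have [B0 B1 B2 B3] := count_rex_word a b c.
  have := C 0; have := C 1; have := C 2; have := C 3.
  rewrite A0 A1 A2 A3 B0 B1 B2 B3 => E3 E2 E1 E0.
  exists m; split=> //; rewrite Er.
  by congr rex_word; lia.
- move=> [m [Hm ->]]; split.
  + exists (lex_word m (6 * m)); split; last by rewrite bdir_lex_word.
    by exists m, (6 * m); split=> //; split=> //; lia.
  + by exists (2 * m), (4 * m), (3 * m); split; [lia | split; [lia | split; [lia | ]]].
Qed.

(* A complete automaton for (03)*(13)*(22)*: states 0, 2, 4 (accepting) read
   the three blocks, 1, 3, 5 are inside a pair, 6 is the sink. *)
Definition rex_delta (q a : nat) : nat :=
  match q, a with
  | 0, 0 => 1 | 0, 1 => 3 | 0, 2 => 5
  | 1, 3 => 0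
  | 2, 1 => 3 | 2, 2 => 5
  | 3, 3 => 2
  | 4, 2 => 5
  | 5, 2 => 4
  | _, _ => 6
  end.

Definition rex_final : seq nat := [:: 0; 2; 4].

Lemma rex_delta_lt q a : rex_delta q a < 7.
Proof. by case: q => [|[|[|[|[|[|q]]]]]]; case: a => [|[|[|[|a]]]]. Qed.

Lemma rex_final_lt f : f \in rex_final -> f < 7.
Proof. by rewrite !inE => /or3P [] /eqP ->. Qed.

Lemma run_rex_sink w : run rex_delta 6 w = 6.
Proof. by elim: w. Qed.

(* States 1 and 3 owe one 3 to a pending 0 or 1. *)
Definition pending q : nat := (q == 1) || (q == 3).

Lemma run_rex_balance w : forall q, run rex_delta q w != 6 ->
  count_mem 0 w + count_mem 1 w + pending q = count_mem 3 w + pending (run rex_delta q w).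
Proof.
elim: w => [|a w IH] q /=; first by rewrite addnC.
case: q => [|[|[|[|[|[|q]]]]]]; case: a => [|[|[|[|a]]]] /=;
  rewrite ?run_rex_sink // => H; have := IH _ H; rewrite /pending /=;
  move: (_ == 1) (_ == 3) => b1 b3; lia.
Qed.

Lemma rex_accepted_balance w : run rex_delta 0 w \in rex_final ->
  count_mem 0 w + count_mem 1 w = count_mem 3 w.
Proof.
move=> Hacc; have Hsink : run rex_delta 0 w != 6.
  by move: Hacc; rewrite !inE => /or3P [] /eqP ->.
have := run_rex_balance Hsink; move: Hacc; rewrite !inE => /or3P [] /eqP ->.
all: by rewrite /= !addn0.
Qed.

Lemma run_rex_loop q s k : run rex_delta q s = q -> run rex_delta q (flatten (nseq k s)) = q.
Proof. by move=> H; elim: k => [//|k IH]; rewrite /= run_cat H. Qed.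

Lemma run_rex_block q s k q' : run rex_delta q s = q' -> run rex_delta q' s = q' ->
  run rex_delta q (flatten (nseq k.+1 s)) = q'.
Proof. by move=> Hq Hq'; rewrite /= run_cat Hq run_rex_loop. Qed.

Lemma run_mex_word m : 0 < m -> run rex_delta 0 (mex_word m) = 4.
Proof.
case: m => [//|m] _; rewrite /mex_word /rex_word.
have -> : 4 * m.+1 = (4 * m).+3.+1 by lia.
have -> : 3 * m.+1 = (3 * m).+2.+1 by lia.
rewrite run_cat (@run_rex_loop 0 [:: 0; 3]) // run_cat (@run_rex_block 0 [:: 1; 3] _ 2) //.
by rewrite (@run_rex_block 2 [:: 2; 2] _ 4).
Qed.

Lemma size_mex_word M : size (mex_word M) = 18 * M.
Proof. by rewrite /mex_word /rex_word !size_cat !size_flatten_nseq /=; lia. Qed.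

Lemma mex_word_letters M : all (fun a => a < 4) (mex_word M).
Proof.
apply/allP => a; rewrite !mem_cat => /or3P [] /mem_flatten_nseq.
all: by rewrite !inE => /orP [] /eqP ->.
Qed.

Lemma size_by_counts (d : seq nat) : all (fun a => a < 4) d ->
  size d = count_mem 0 d + count_mem 1 d + count_mem 2 d + count_mem 3 d.
Proof.
elim: d => [//|a d IH] /= /andP [Ha Hd]; rewrite IH //.
by case: a Ha => [|[|[|[|a]]]] //= _; lia.
Qed.

Lemma count_mem_gt0 (T : eqType) (x : T) s : 0 < count_mem x s -> x \in s.
Proof. by rewrite -has_count has_pred1. Qed.

(* Adding a nonempty factor d to mex_word M keeps a word that lies in bdir(Lex)
   and satisfies the balance #0 + #1 = #3 only if d contains a 0 and a 2:
   comparing with the counts of Lex, the letters of d satisfy #1 = 2 #0 and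
   #2 = #3, and the balance adds #2 = 3 #0, so d without 0 would be empty. *)
Lemma pumped_letters M z d : bdir_lang Lex z ->
  count_mem 0 z + count_mem 1 z = count_mem 3 z ->
  (forall k, count_mem k z = count_mem k (mex_word M) + count_mem k d) ->
  all (fun a => a < 4) d -> 0 < size d -> 0 \in d /\ 2 \in d.
Proof.
move=> [v [[m [n [_ [_ Ev]]]] Ez]] Hbal Hcnt Hd Hsz.
have Cz k : count_mem k z = count_mem k (lex_word m n) by rewrite Ez count_bdir Ev.
have [A0 A1 A2 A3] := count_lex_word m n.
have [B0 B1 B2 B3] := count_rex_word (2 * M) (4 * M) (3 * M).
move: Hbal Hsz (Hcnt 0) (Hcnt 1) (Hcnt 2) (Hcnt 3); rewrite size_by_counts // !Cz.
rewrite /mex_word A0 A1 A2 A3 B0 B1 B2 B3 => *.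
by split; apply: count_mem_gt0; lia.
Qed.

Lemma mex_factor_long M u t y : mex_word M = u ++ t ++ y -> 0 \in t -> 2 \in t ->
  8 * M < size t.
Proof.
move=> Ez H0 H2; have := factor_straddles Ez H0 _ H2.
rewrite size_flatten_nseq /= muln2 -mul2n mulnA; apply.
  by rewrite mem_cat; apply/norP; split; apply/negP => /mem_flatten_nseq.
by rewrite mem_cat; apply/norP; split; apply/negP => /mem_flatten_nseq.
Qed.

(* Pump mex_word M, for M beyond the pumping constant, in a grammar for
   bdir(Lex) restricted to (03)*(13)*(22)*: the pumped factor would have to
   contain a 0 and a 2, hence be longer than the constant. *)
Lemma bdir_lex_not_context_free : ~ context_free (bdir_lang Lex).
Proof.
move=> /(context_free_inter_dfa rex_delta_lt (isT : 0 < 7) rex_final_lt) [G HG].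
have [p Hp] := cfg_pumping G.
pose M := p.+1.
have Hz : cfg_language G (mex_word M).
  apply/HG; split; last by rewrite run_mex_word.
  by case: (bdir_lex_inter_rex (mex_word M)) => _ [] //; exists M.
have Hsize : p < size (mex_word M) by rewrite size_mex_word; lia.
have [u [v [m [x [y [Ez Hvx Hsmall /HG [Hbdir Hacc]]]]]]] := Hp _ Hz Hsize.
have [H0 H2] : 0 \in v ++ x /\ 2 \in v ++ x.
  apply: (pumped_letters (M := M) Hbdir (rex_accepted_balance Hacc)) => //.
    by move=> k; rewrite Ez !count_cat; lia.
  by have := mex_word_letters M; rewrite Ez !all_cat => /and5P [_ -> _ -> _].
have sub_vmx : {subset v ++ x <= v ++ m ++ x}.
  by move=> a; rewrite !mem_cat => /orP [] ->; rewrite ?orbT.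
have Esplit : mex_word M = u ++ (v ++ m ++ x) ++ y by rewrite Ez !catA.
have := leq_trans (mex_factor_long Esplit (sub_vmx _ H0) (sub_vmx _ H2)) Hsmall.
by rewrite /M; lia.
Qed.

Theorem mainTheorem16 :
  context_free Lex /\
  (forall w, (bdir_lang Lex w /\ Rex w) <-> Mex w) /\
  ~ context_free (bdir_lang Lex) /\
  ~ (forall L : language nat, context_free L -> context_free (bdir_lang L)).
Proof.
split; first exact: lex_context_free.
split; first exact: bdir_lex_inter_rex.
split; first exact: bdir_lex_not_context_free.
by move=> bdir_closed; apply/bdir_lex_not_context_free/bdir_closed/lex_context_free.
Qed.
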